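(* Let $G_i=(V_i,E_i)$ be a simple graph of maximum degree $\Delta_i$ and minimum degree $\delta_i$, $i\in\{1,2\}$, and let $S\subseteq V_1\times V_2$. Then: (i) If for some $i\in\{1,2\}$ and integer $k_i$, $P_{V_i}(S)$ is a $k_i$-paf set in $G_i$, then for every integer $k\in\{k_i+\Delta_j,\dots,\Delta_i+\Delta_j-2\}$, $S$ is a $k$-paf set in $G_1\times G_2$, where $j\in\{1,2\}$, $j\neq i$. (ii) If for integers $k_1,k_2$, $P_{V_1}(S)$ is a $k_1$-paf set in $G_1$ and $P_{V_2}(S)$ is a $k_2$-paf set in $G_2$, then for every integer $k\in\{k',\dots,\Delta_1+\Delta_2-2\}$, $S$ is a $k$-paf set in $G_1\times G_2$, where $k'=\max\{k_1+k_2-1,\;\min\{k_2-\delta_1,\,k_1-\delta_2\}\}$.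
   Context: All graphs are finite and simple. For a graph $G=(V,E)$, a set $S\subseteq V$ and $v\in V$, let $\delta_S(v)=|\{u\in S: uv\in E\}|$, $\overline{S}=V\setminus S$, and let $\partial S$ be the set of vertices of $\overline S$ adjacent to at least one vertex of $S$. For an integer $k$, a non-empty set $S\subseteq V$ is a defensive $k$-alliance if $\delta_S(v)\ge \delta_{\overline S}(v)+k$ for every $v\in S$; an offensive $k$-alliance if $\delta_S(v)\ge \delta_{\overline S}(v)+k$ for every $v\in\partial S$; and a powerful $k$-alliance if it is both a defensive $k$-alliance and an offensive $(k+2)$-alliance. A set $X\subseteq V$ is a powerful $k$-alliance free set ($k$-paf set) if no powerful $k$-alliance $S$ satisfies $S\subseteq X$. The Cartesian product $G_1\times G_2$ of $G_1=(V_1,E_1)$, $G_2=(V_2,E_2)$ has vertex set $V_1\times V_2$, with $(a,b)$ adjacent to $(c,d)$ iff either $a=c$ and $bd\in E_2$, or $b=d$ and $ac\in E_1$. For $A\subseteq V_1\times V_2$, $P_{V_i}(A)$ denotes the projection of $A$ onto $V_i$. *)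

From HB Require Import structures.
From mathcomp Require Import all_boot all_order all_algebra.
Set Implicit Arguments. Unset Strict Implicit. Unset Printing Implicit Defensive.
Import Order.TTheory GRing.Theory Num.Theory.

(* A simple graph is a symmetric irreflexive relation e on a finType T. *)
Section Alliances.
Variables (T : finType) (e : rel T).

Definition delta (S : {set T}) (v : T) : nat := #|[set u in S | e u v]|.

Definition deg (v : T) : nat := #|[set u | e u v]|.

(* maximum degree (0 for the empty graph) *)
Definition maxdeg : nat := \max_(v : T) deg v.
(* minimum degree (the identity #|T| is never reached for nonempty T,
   since deg v < #|T| for an irreflexive relation) *)
Definition mindeg : nat := \big[minn/#|T|]_(v : T) deg v.

Definition bdry (S : {set T}) : {set T} :=
  [set v in ~: S | [exists u in S, e u v]].

Definition defensive_alliance (k : int) (S : {set T}) : Prop :=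
  S != set0 /\
  forall v, v \in S -> ((delta (~: S) v)%:Z + k <= (delta S v)%:Z)%R.

Definition offensive_alliance (k : int) (S : {set T}) : Prop :=
  S != set0 /\
  forall v, v \in bdry S -> ((delta (~: S) v)%:Z + k <= (delta S v)%:Z)%R.

Definition powerful_alliance (k : int) (S : {set T}) : Prop :=
  defensive_alliance k S /\ offensive_alliance (k + 2)%R S.

Definition paf (k : int) (X : {set T}) : Prop :=
  forall S : {set T}, S \subset X -> ~ powerful_alliance k S.

End Alliances.

Definition cprod (T1 T2 : finType) (e1 : rel T1) (e2 : rel T2) : rel (T1 * T2) :=
  fun x y => ((x.1 == y.1) && e2 x.2 y.2) || ((x.2 == y.2) && e1 x.1 y.1).

From HB Require Import structures.
From mathcomp Require Import all_boot all_order all_algebra.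
From mathcomp Require Import zify.
Import Order.TTheory GRing.Theory Num.Theory.
Set Implicit Arguments. Unset Strict Implicit. Unset Printing Implicit Defensive.

(* Since
   delta_S(v) + delta_{~S}(v) = deg(v), the alliance inequality
   delta_{~S}(v) + k <= delta_S(v) reads deg(v) + k <= 2 delta_S(v).  In
   G1 x G2 the neighbours of (a, b) inside A are those of a inside the row
   {a' | (a', b) in A} plus those of b inside the column {b' | (a, b') in A},
   and deg(a, b) = deg(a) + deg(b).  From this we derive three transfer
   lemmas for a powerful k-alliance A of G1 x G2:
   - its first projection is a powerful k1-alliance of G1 if k1 + Delta2 <= k;
   - its second projection is an offensive (k2 + 2)-alliance of G2 if
     k2 - delta1 <= k;
   - a row of A through a vertex b0 where the second projection has few
     neighbours is a powerful k1-alliance of G1.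
   Part (i) follows from the first lemma; part (ii) from the other two, as
   either the second projection is also a defensive k2-alliance or one of its
   vertices has few neighbours in it.  The symmetric cases are obtained by
   exchanging the factors, since powerful alliances are transported along
   graph isomorphisms. *)

Section Degrees.
Variables (T : finType) (e : rel T).

Lemma delta_split (S : {set T}) v : delta e S v + delta e (~: S) v = deg e v.
Proof.
rewrite /delta /deg -(cardsID S [set u | e u v]).
by congr (_ + _); apply: eq_card => u; rewrite !inE andbC.
Qed.

Lemma delta_setT v : delta e setT v = deg e v.
Proof. by apply: eq_card => u; rewrite !inE. Qed.

Lemma delta_sub (A B : {set T}) v : A \subset B -> delta e A v <= delta e B v.
Proof.
move=> sAB; apply/subset_leq_card/subsetP => u; rewrite !inE => /andP[uA ->].
by rewrite (subsetP sAB).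
Qed.

Lemma delta_le_deg (A : {set T}) v : delta e A v <= deg e v.
Proof. by rewrite -(delta_split A v) leq_addr. Qed.

Lemma delta_set0 v : delta e set0 v = 0.
Proof. by apply/eqP; rewrite cards_eq0; apply/eqP/setP => u; rewrite !inE. Qed.

Lemma mindeg_le v : mindeg e <= deg e v.
Proof.
rewrite /mindeg; have : v \in index_enum T by rewrite mem_index_enum.
elim: (index_enum T) => [|x r IHr] //; rewrite inE big_cons => /predU1P[<-|/IHr].
  exact: geq_minl.
exact: leq_trans (geq_minr _ _).
Qed.

Lemma maxdeg_ge v : deg e v <= maxdeg e.
Proof. exact: leq_bigmax. Qed.

Lemma bdry_notin (S : {set T}) v : v \in bdry e S -> v \notin S.
Proof. by rewrite !inE => /andP[]. Qed.

End Degrees.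

Section CartesianProduct.
Variables (T1 T2 : finType) (e1 : rel T1) (e2 : rel T2).

Definition row_of (A : {set T1 * T2}) (b : T2) : {set T1} := [set a | (a, b) \in A].
Definition col_of (A : {set T1 * T2}) (a : T1) : {set T2} := [set b | (a, b) \in A].

Lemma row_sub_proj (A : {set T1 * T2}) b : row_of A b \subset [set x.1 | x in A].
Proof. by apply/subsetP => a; rewrite inE => abA; apply/imsetP; exists (a, b). Qed.

Lemma col_sub_proj (A : {set T1 * T2}) a : col_of A a \subset [set x.2 | x in A].
Proof. by apply/subsetP => b; rewrite inE => abA; apply/imsetP; exists (a, b). Qed.

Lemma row_of_outside (A : {set T1 * T2}) b :
  b \notin [set x.2 | x in A] -> row_of A b = set0.
Proof.
move=> bA; apply/setP => a; rewrite !inE; apply: contraNF bA => abA.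
by apply/imsetP; exists (a, b).
Qed.

Lemma col_of_outside (A : {set T1 * T2}) a :
  a \notin [set x.1 | x in A] -> col_of A a = set0.
Proof.
move=> aA; apply/setP => b; rewrite !inE; apply: contraNF aA => abA.
by apply/imsetP; exists (a, b).
Qed.

Lemma bdry_row (A : {set T1 * T2}) a b :
  a \in bdry e1 (row_of A b) -> (a, b) \in bdry (cprod e1 e2) A.
Proof.
rewrite !inE => /andP[abA /existsP[a' /andP[]]]; rewrite inE => a'bA ea'a.
by rewrite abA; apply/existsP; exists (a', b); rewrite a'bA /cprod /= eqxx ea'a orbT.
Qed.

Lemma bdry_col (A : {set T1 * T2}) a b :
  b \in bdry e2 (col_of A a) -> (a, b) \in bdry (cprod e1 e2) A.
Proof.
rewrite !inE => /andP[abA /existsP[b' /andP[]]]; rewrite inE => ab'A eb'b.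
by rewrite abA; apply/existsP; exists (a, b'); rewrite ab'A /cprod /= eqxx eb'b.
Qed.

Lemma bdry_proj1 (A : {set T1 * T2}) a :
  a \in bdry e1 [set x.1 | x in A] -> exists b, a \in bdry e1 (row_of A b).
Proof.
rewrite !inE => /andP[aA /existsP[a' /andP[/imsetP[[a1 b] a1bA ->] ea'a]]].
exists b; rewrite !inE; apply/andP; split.
  by apply: contraNN aA => abA; apply/imsetP; exists (a, b).
by apply/existsP; exists a1; rewrite inE a1bA.
Qed.

Lemma bdry_proj2 (A : {set T1 * T2}) b :
  b \in bdry e2 [set x.2 | x in A] -> exists a, b \in bdry e2 (col_of A a).
Proof.
rewrite !inE => /andP[bA /existsP[b' /andP[/imsetP[[a b1] ab1A ->] eb'b]]].
exists a; rewrite !inE; apply/andP; split.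
  by apply: contraNN bA => abA; apply/imsetP; exists (a, b).
by apply/existsP; exists b1; rewrite inE ab1A.
Qed.

Hypothesis irr2 : irreflexive e2.

(* The neighbours of (a, b) in A are those in its row plus those in its
   column; the two families are disjoint because G2 has no loops. *)
Lemma delta_cprod (A : {set T1 * T2}) a b :
  delta (cprod e1 e2) A (a, b) = delta e1 (row_of A b) a + delta e2 (col_of A a) b.
Proof.
rewrite /delta.
set R := [set a' in row_of A b | e1 a' a]; set C := [set b' in col_of A a | e2 b' b].
have -> : [set u in A | cprod e1 e2 u (a, b)] = setX R [set b] :|: setX [set a] C.
  apply/setP => -[x y]; rewrite !inE /cprod /=.
  by case: (eqVneq x a) => [->|_]; case: (eqVneq y b) => [->|_];
    rewrite ?irr2 /= ?andbF ?orbF ?andbT.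
rewrite cardsU; have -> : setX R [set b] :&: setX [set a] C = set0.
  apply/setP => -[x y]; rewrite !inE /=.
  by case: (eqVneq y b) => [->|]; rewrite ?irr2 ?andbF.
by rewrite cards0 subn0 !cardsX !cards1 muln1 mul1n.
Qed.

Lemma deg_cprod a b : deg (cprod e1 e2) (a, b) = deg e1 a + deg e2 b.
Proof.
rewrite -!delta_setT delta_cprod.
by congr (_ + _); apply: eq_card => u; rewrite !inE.
Qed.

End CartesianProduct.

Local Open Scope ring_scope.

Lemma alliance_ineqE (T : finType) (e : rel T) (S : {set T}) v (k : int) :
  ((delta e (~: S) v)%:Z + k <= (delta e S v)%:Z) =
  ((deg e v)%:Z + k <= 2 * (delta e S v)%:Z).
Proof. by rewrite -(delta_split e S v) PoszD; apply/idP/idP; lia. Qed.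

Section AllianceTransfer.
Variables (T1 T2 : finType) (e1 : rel T1) (e2 : rel T2).
Hypothesis irr2 : irreflexive e2.
Local Notation G := (cprod e1 e2).

Lemma cprod_ineqE (A : {set T1 * T2}) a b (k : int) :
  ((delta G (~: A) (a, b))%:Z + k <= (delta G A (a, b))%:Z) =
  ((deg e1 a)%:Z + (deg e2 b)%:Z + k <=
     2 * ((delta e1 (row_of A b) a)%:Z + (delta e2 (col_of A a) b)%:Z)).
Proof. by rewrite alliance_ineqE (deg_cprod e1 irr2) (delta_cprod e1 irr2) !PoszD. Qed.

(* A column contributes at most Delta2 neighbours, so projecting a powerful
   k-alliance onto G1 loses at most Delta2 in the defensive condition. *)
Lemma proj1_powerful (k1 k : int) (A : {set T1 * T2}) :
  powerful_alliance G k A -> k1 + (maxdeg e2)%:Z <= k ->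
  powerful_alliance e1 k1 [set x.1 | x in A].
Proof.
move=> [[A0 defA] [_ offA]] hk.
have P0 : [set x.1 | x in A] != set0 by rewrite imset_eq0.
split; split=> //.
- move=> _ /imsetP[[a b] abA ->]; rewrite -[(a, b).1]/a.
  have := defA _ abA; rewrite cprod_ineqE alliance_ineqE.
  have := delta_sub e1 a (row_sub_proj A b).
  have := delta_le_deg e2 (col_of A a) b; have := maxdeg_ge e2 b; lia.
- move=> a aB; have [b ab] := bdry_proj1 aB; have := offA _ (bdry_row e2 ab).
  rewrite cprod_ineqE alliance_ineqE col_of_outside ?delta_set0 ?(bdry_notin aB) //.
  have := delta_sub e1 a (row_sub_proj A b); lia.
Qed.

(* If b0 has few neighbours in the second projection, the row of A at b0
   inherits the alliance conditions of A up to the shift 2 delta(b0) - deg(b0). *)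
Lemma row_powerful (k1 k : int) (A : {set T1 * T2}) a0 b0 :
  powerful_alliance G k A -> (a0, b0) \in A ->
  2 * (delta e2 [set x.2 | x in A] b0)%:Z + k1 <= (deg e2 b0)%:Z + k ->
  powerful_alliance e1 k1 (row_of A b0).
Proof.
move=> [[A0 defA] [_ offA]] abA hb.
have R0 : row_of A b0 != set0 by apply/set0Pn; exists a0; rewrite inE.
split; split=> //.
- move=> a; rewrite inE => /defA; rewrite cprod_ineqE alliance_ineqE.
  have := delta_sub e2 b0 (col_sub_proj A a); lia.
- move=> a ab; have := offA _ (bdry_row e2 ab); rewrite cprod_ineqE alliance_ineqE.
  have := delta_sub e2 b0 (col_sub_proj A a); lia.
Qed.

(* At a boundary vertex (a, b) with b outside the second projection the row
   is empty, and deg(a) >= delta1 absorbs the shift of the offensive bound. *)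
Lemma proj2_offensive (k2 k : int) (A : {set T1 * T2}) :
  powerful_alliance G k A -> k2 <= k + (mindeg e1)%:Z ->
  offensive_alliance e2 (k2 + 2) [set x.2 | x in A].
Proof.
move=> [[A0 _] [_ offA]] hk; split=> [|b bB]; first by rewrite imset_eq0.
have [a ab] := bdry_proj2 bB; have := offA _ (bdry_col e1 ab).
rewrite cprod_ineqE alliance_ineqE row_of_outside ?delta_set0 ?(bdry_notin bB) //.
have := delta_sub e2 b (col_sub_proj A a); have := mindeg_le e1 a; lia.
Qed.

End AllianceTransfer.

Section Isomorphism.
Variables (T T' : finType) (e : rel T) (e' : rel T') (f : T' -> T).
Hypotheses (f_bij : bijective f) (f_edge : forall u v, e (f u) (f v) = e' u v).

Lemma delta_preim (S : {set T}) v : delta e' (f @^-1: S) v = delta e S (f v).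
Proof.
rewrite /delta -(card_imset _ (bij_inj f_bij)); apply: eq_card => w.
have [g fK gK] := f_bij.
by rewrite -(gK w) (mem_imset _ _ (bij_inj f_bij)) !inE f_edge.
Qed.

Lemma bdry_preim (S : {set T}) v : (v \in bdry e' (f @^-1: S)) = (f v \in bdry e S).
Proof.
have [g fK gK] := f_bij.
rewrite !inE; congr (_ && _); apply/existsP/existsP => [[u]|[w]].
  by rewrite inE -f_edge => uS; exists (f u).
by rewrite -(gK w) f_edge => wS; exists (g w); rewrite inE.
Qed.

Lemma powerful_preim (k : int) (S : {set T}) :
  powerful_alliance e k S -> powerful_alliance e' k (f @^-1: S).
Proof.
have [g fK gK] := f_bij.
move=> [[/set0Pn[x xS] defS] [_ offS]].
have P0 : f @^-1: S != set0 by apply/set0Pn; exists (g x); rewrite inE gK.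
split; split=> // v; rewrite -preimsetC !delta_preim.
  by rewrite inE; apply: defS.
by rewrite bdry_preim; apply: offS.
Qed.

Lemma paf_preim (k : int) (X : {set T}) : paf e' k (f @^-1: X) -> paf e k X.
Proof. by move=> pafX A sAX /powerful_preim; apply: pafX; apply: preimsetS. Qed.

End Isomorphism.

Section Swap.
Variables (T1 T2 : finType) (e1 : rel T1) (e2 : rel T2).

Lemma swap_bij : bijective (@swap_pair T2 T1).
Proof. exact: (Bijective swap_pairK swap_pairK). Qed.

Lemma cprod_swap (u v : T2 * T1) :
  cprod e1 e2 (swap_pair u) (swap_pair v) = cprod e2 e1 u v.
Proof. by rewrite /cprod orbC. Qed.

Lemma proj1_swap (S : {set T1 * T2}) :
  [set x.1 | x in swap_pair @^-1: S] = [set x.2 | x in S].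
Proof.
apply/setP => b; apply/imsetP/imsetP => -[x]; rewrite ?inE => xS ->.
  by exists (swap_pair x).
by exists (swap_pair x); rewrite // inE swap_pairK.
Qed.

Lemma proj2_swap (S : {set T1 * T2}) :
  [set x.2 | x in swap_pair @^-1: S] = [set x.1 | x in S].
Proof.
apply/setP => a; apply/imsetP/imsetP => -[x]; rewrite ?inE => xS ->.
  by exists (swap_pair x).
by exists (swap_pair x); rewrite // inE swap_pairK.
Qed.

End Swap.

Section PafProduct.
Variables (T1 T2 : finType) (e1 : rel T1) (e2 : rel T2).
Hypothesis irr2 : irreflexive e2.
Variable S : {set T1 * T2}.

Lemma paf_cprod_proj1 (k1 k : int) :
  paf e1 k1 [set x.1 | x in S] -> k1 + (maxdeg e2)%:Z <= k ->
  paf (cprod e1 e2) k S.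
Proof.
move=> paf1 hk A sAS /(proj1_powerful irr2)/(_ hk).
by apply: paf1; apply: imsetS.
Qed.

(* Part (ii) in the case k2 - delta1 <= k: the second projection of a
   powerful k-alliance is offensive, so it is either a powerful k2-alliance
   or has a vertex b0 with few neighbours in it, whose row is then a powerful
   k1-alliance. *)
Lemma paf_cprod_both (k1 k2 k : int) :
  paf e1 k1 [set x.1 | x in S] -> paf e2 k2 [set x.2 | x in S] ->
  k1 + k2 - 1 <= k -> k2 - (mindeg e1)%:Z <= k ->
  paf (cprod e1 e2) k S.
Proof.
move=> paf1 paf2 hk hm A sAS powA.
have offA : offensive_alliance e2 (k2 + 2) [set x.2 | x in A].
  by apply: (proj2_offensive irr2 powA); lia.
have [defA | /forall_inPn[b /imsetP[[a0 b0] abA ->]]] := boolP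
  [forall b in [set x.2 | x in A],
     (deg e2 b)%:Z + k2 <= 2 * (delta e2 [set x.2 | x in A] b)%:Z].
  apply: (paf2 [set x.2 | x in A]); first exact: imsetS.
  split=> //; split; first by case: offA.
  by move=> b bA; rewrite alliance_ineqE; apply: (forall_inP defA).
rewrite -[(a0, b0).2]/b0 -ltNge => few_b0.
have /(row_powerful irr2 powA abA) : 2 * (delta e2 [set x.2 | x in A] b0)%:Z + k1
    <= (deg e2 b0)%:Z + k by lia.
apply: paf1; apply: subset_trans (row_sub_proj A b0) (imsetS _ sAS).
Qed.

End PafProduct.

Theorem theorem5 (T1 T2 : finType) (e1 : rel T1) (e2 : rel T2)
  (sym1 : symmetric e1) (irr1 : irreflexive e1)
  (sym2 : symmetric e2) (irr2 : irreflexive e2)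
  (S : {set T1 * T2}) :
  (* (i), case i = 1, j = 2 *)
  (forall k1 k : int, paf e1 k1 [set x.1 | x in S] ->
     (k1 + (maxdeg e2)%:Z <= k <= (maxdeg e1)%:Z + (maxdeg e2)%:Z - 2) ->
     paf (cprod e1 e2) k S) /\
  (* (i), case i = 2, j = 1 *)
  (forall k2 k : int, paf e2 k2 [set x.2 | x in S] ->
     (k2 + (maxdeg e1)%:Z <= k <= (maxdeg e2)%:Z + (maxdeg e1)%:Z - 2) ->
     paf (cprod e1 e2) k S) /\
  (* (ii) *)
  (forall k1 k2 k : int,
     paf e1 k1 [set x.1 | x in S] -> paf e2 k2 [set x.2 | x in S] ->
     (Num.max (k1 + k2 - 1) (Num.min (k2 - (mindeg e1)%:Z) (k1 - (mindeg e2)%:Z)) <= k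
       <= (maxdeg e1)%:Z + (maxdeg e2)%:Z - 2) ->
     paf (cprod e1 e2) k S).
Proof.
(* The cases with the roles of the factors exchanged go through G2 x G1. *)
have swapped k : paf (cprod e2 e1) k (swap_pair @^-1: S) -> paf (cprod e1 e2) k S.
  exact: (paf_preim (swap_bij T1 T2) (cprod_swap e1 e2)).
split; [|split].
- by move=> k1 k paf1 /andP[hk _]; apply: paf_cprod_proj1 paf1 hk.
- move=> k2 k paf2 /andP[hk _]; apply/swapped/(paf_cprod_proj1 irr1 _ hk).
  by rewrite proj1_swap.
- move=> k1 k2 k paf1 paf2 /andP[]; rewrite ge_max ge_min => /andP[hk /orP[hm|hm]] _.
    exact: paf_cprod_both paf1 paf2 hk hm.
  apply/swapped/(paf_cprod_both irr1 (k1 := k2) (k2 := k1));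
    rewrite ?proj1_swap ?proj2_swap //; lia.
Qed.
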